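(* Consider the online class matching problem in the divisible setting (described in the context). For every $\gamma \in [0,1]$, there exists an online divisible algorithm that is simultaneously $\left(1 - \frac{e^{\gamma-1}}{\gamma+1}\right)$-USW and $(1-e^{-\gamma})$-CEF.
   Context: Online class matching: an instance is a bipartite graph $G=(N,M,E)$ with a set $N$ of agents (known in advance), a set $M$ of items, and $E \subseteq M \times N$; agent $a$ likes item $o$ iff $(o,a)\in E$. The agents are partitioned into $k$ known classes $N_1,\dots,N_k$. Items arrive one at a time in an adversarially chosen order; when item $o$ arrives, the set of agents liking $o$ is revealed and the algorithm must immediately and irrevocably assign (in the divisible setting, fractions of) $o$ to agents liking it. A fractional matching is $X=(x_{o,a})\in[0,1]^{M\times N}$ supported on $E$ with $\sum_a x_{o,a}\le 1$ for every item $o$ and $\sum_o x_{o,a}\le 1$ for every agent $a$. The value of agent $a$ is $V_a(X)=\sum_o x_{o,a}$ and the class value is $V_i(X)=\sum_{a\in N_i}V_a(X)$. For each class $j$, let $y_j(X)\in[0,1]^M$ with $y_j(X)_o=\sum_{a\in N_j}x_{o,a}$. For $y\in[0,1]^M$, the optimistic valuation $V_i^*(y)$ is the maximum size of a fractional matching using edges of $E$ between $N_i$ and $M$ in which each item $o$ has fractional degree at most $y_o$ and each agent has fractional degree at most $1$. The utilitarian social welfare is $\mathrm{usw}(X)=\sum_i V_i(X)$. A (possibly randomized) online algorithm outputting $X$ is $\alpha$-CEF if on every instance, for all classes $i,j$, $\mathbb{E}[V_i(X)]\ge \alpha\,\mathbb{E}[V_i^*(y_j(X))]$; it is $\beta$-USW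 if on every instance $\mathbb{E}[\mathrm{usw}(X)]\ge \beta\cdot \mathrm{usw}(X^* )$ for every fractional matching $X^*$ of $G$. *)

From HB Require Import structures.
From mathcomp Require Import all_boot all_order all_algebra.
From mathcomp Require Import all_classical reals sequences.
Set Implicit Arguments. Unset Strict Implicit. Unset Printing Implicit Defensive.
Import Order.TTheory GRing.Theory Num.Theory.
Local Open Scope ring_scope.
Local Open Scope classical_set_scope.

(* An instance: agents 'I_n, classes 'I_k with class map [cls], items 'I_m
   indexed by arrival time (item o arrives at step o; the adversarial order is
   thus encoded by the adversary's choice of E), and [E o] = the set of agents
   liking item o. *)

Section OnlineClassMatching.
Variable R : realType.

Definition frac_matching n m (E : 'I_m -> {set 'I_n}) (x : 'I_m -> 'I_n -> R) :=
  [/\ forall o a, 0 <= x o a,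
      forall o a, a \notin E o -> x o a = 0,
      forall o, \sum_(a < n) x o a <= 1 &
      forall a, \sum_(o < m) x o a <= 1].

Definition agent_val n m (x : 'I_m -> 'I_n -> R) (a : 'I_n) : R :=
  \sum_(o < m) x o a.

Definition class_val n k m (cls : 'I_n -> 'I_k) (x : 'I_m -> 'I_n -> R)
  (i : 'I_k) : R := \sum_(a < n | cls a == i) agent_val x a.

Definition usw n m (x : 'I_m -> 'I_n -> R) : R := \sum_(a < n) agent_val x a.

Definition class_alloc n k m (cls : 'I_n -> 'I_k) (x : 'I_m -> 'I_n -> R)
  (j : 'I_k) : 'I_m -> R := fun o => \sum_(a < n | cls a == j) x o a.

(* optimistic valuation V_i^*(y): maximum size of a fractional matching using
   edges of E between N_i and M, item o having degree <= y o and every agent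
   degree <= 1 (the maximum is attained; we write it as a supremum). *)
Definition opt_val n k m (cls : 'I_n -> 'I_k) (E : 'I_m -> {set 'I_n})
  (i : 'I_k) (y : 'I_m -> R) : R :=
  sup [set v | exists z : 'I_m -> 'I_n -> R,
     [/\ forall o a, 0 <= z o a,
         forall o a, (a \notin E o) || (cls a != i) -> z o a = 0,
         forall o, \sum_(a < n) z o a <= y o,
         forall a, \sum_(o < m) z o a <= 1 &
         v = \sum_(o < m) \sum_(a < n | cls a == i) z o a]].

(* A deterministic online divisible algorithm: knowing the agents (n), the
   classes (k, cls) in advance, and the sequence of neighbourhoods of the items
   arrived so far (the last one being the current item), it outputs the
   fractions of the current item given to each agent.  (Its own past decisions
   are a function of the same data, so they are implicitly available.)  It
   does not know the number of items or the future items. *)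
Definition online_alg :=
  forall (n k : nat), ('I_n -> 'I_k) -> seq {set 'I_n} -> 'I_n -> R.

Definition run (A : online_alg) n k (cls : 'I_n -> 'I_k) m
  (E : 'I_m -> {set 'I_n}) : 'I_m -> 'I_n -> R :=
  fun o a => A n k cls [seq E j | j <- take o.+1 (enum 'I_m)] a.

Definition randomized_alg r (p : 'I_r -> R) (A : 'I_r -> online_alg) :=
  [/\ forall s, 0 <= p s,
      \sum_(s < r) p s = 1 &
      forall s n k (cls : 'I_n -> 'I_k) m (E : 'I_m -> {set 'I_n}),
        frac_matching E (run (A s) cls E)].

Definition expect r (p : 'I_r -> R) (A : 'I_r -> online_alg)
  (f : online_alg -> R) : R := \sum_(s < r) p s * f (A s).

Definition is_CEF r (p : 'I_r -> R) (A : 'I_r -> online_alg) (alpha : R) :=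
  forall n k (cls : 'I_n -> 'I_k) m (E : 'I_m -> {set 'I_n}) (i j : 'I_k),
    expect p A (fun B => class_val cls (run B cls E) i) >=
    alpha * expect p A (fun B => opt_val cls E i (class_alloc cls (run B cls E) j)).

Definition is_USW r (p : 'I_r -> R) (A : 'I_r -> online_alg) (beta : R) :=
  forall n k (cls : 'I_n -> 'I_k) m (E : 'I_m -> {set 'I_n})
    (xstar : 'I_m -> 'I_n -> R),
    frac_matching E xstar ->
    expect p A (fun B => usw (run B cls E)) >= beta * usw xstar.

End OnlineClassMatching.

(* The algorithm is deterministic water-filling with threshold [gamma] (see [step]).
   Both guarantees come from an online primal-dual argument.  An agent at level [x]
   holds the dual value [usw_potential x] (resp. [cef_potential x]), and an item keeps
   as dual value the part of its mass not turned into potential; by convexity of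
   [expR] this is at least the mass times one minus the "price" of the level reached.
   Water-filling makes every edge of the instance covered by these duals up to the
   factor [1 - e^(gamma-1)/(gamma+1)], resp., for the duals of class [i] weighted by the
   allocation of class [j], up to [1 - e^(-gamma)]: an item leaves an agent of class
   [i] strictly below [gamma] only after giving class [i] its largest share.  Weak LP
   duality turns these covers into the two bounds. *)

From HB Require Import structures.
From mathcomp Require Import all_boot all_order all_algebra.
From mathcomp Require Import all_classical reals sequences.
From mathcomp Require Import topology normedtype exp.
From mathcomp Require Import lra.
Import Order.TTheory GRing.Theory Num.Theory.
Import numFieldNormedType.Exports.
Local Open Scope ring_scope.
Set Implicit Arguments. Unset Strict Implicit. Unset Printing Implicit Defensive.

Ltac case_minmax := repeat match goal with
 | |- context [@Order.min _ _ ?a ?b] => let h := fresh "h" in case: (leP a b) => h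
 | |- context [@Order.max _ _ ?a ?b] => let h := fresh "h" in case: (leP a b) => h
 | H : context [@Order.min _ _ ?a ?b] |- _ =>
     let h := fresh "h" in move: H; case: (leP a b) => h H
 | H : context [@Order.max _ _ ?a ?b] |- _ =>
     let h := fresh "h" in move: H; case: (leP a b) => h H
 end.

Section WaterFilling.
Variable R : realType.

Definition clip (v q : R) : R := Num.min (Num.max v 0) q.

Lemma clip_ge0 (v q : R) : 0 <= q -> 0 <= clip v q.
Proof. by rewrite /clip => q0; case_minmax; lra. Qed.

Lemma clip_le (v q : R) : 0 <= q -> clip v q <= q.
Proof. by rewrite /clip => q0; case_minmax; lra. Qed.

Lemma continuous_clip_sub (p q : R) : continuous (fun L : R => clip (L - p) q).
Proof.
move=> x; apply: (@continuous_min R R (fun L => Num.max (L - p) 0) (fun=> q)).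
  apply: (@continuous_max R R (fun L => L - p) (fun=> 0)).
    by apply: continuousB; [exact: cvg_id | exact: cst_continuous].
  exact: cst_continuous.
exact: cst_continuous.
Qed.

Lemma continuous_sum_clip (I : Type) (r : seq I) (P : pred I) (p q : I -> R) :
  continuous (fun L : R => \sum_(i <- r | P i) clip (L - p i) (q i)).
Proof.
elim: r => [|i r IH].
  by under eq_fun do rewrite big_nil; exact: cst_continuous.
under eq_fun do rewrite big_cons; case: (P i) => //.
move=> x; apply: (@continuousD R R^o R (fun L => clip (L - p i) (q i))
  (fun L => \sum_(j <- r | P j) clip (L - p j) (q j))).
  exact: continuous_clip_sub.
exact: IH.
Qed.

Section Level.
Variables (I : finType) (P : pred I) (p q : I -> R).
Hypothesis q_ge0 : forall i, 0 <= q i.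

(* A level far below every [p i] fills nothing, one far above fills every cap. *)
Lemma exists_water_level t : 0 <= t <= \sum_(i | P i) q i ->
  exists L, \sum_(i | P i) clip (L - p i) (q i) = t.
Proof.
move=> /andP[t0 tS].
set lo := - \sum_j `|p j|; set hi := \sum_j (`|p j| + q j).
have p_le i : lo + `|p i| <= 0.
  by rewrite /lo addrC subr_le0 (bigD1 i) //= lerDl sumr_ge0.
have pq_le i : `|p i| + q i <= hi.
  by rewrite /hi (bigD1 i) //= lerDl sumr_ge0 // => j _; rewrite addr_ge0.
have Flo : \sum_(i | P i) clip (lo - p i) (q i) = 0.
  apply: big1 => i _; have := ler_norm (- p i); rewrite normrN /clip.
  by have := p_le i; have := q_ge0 i; case_minmax; lra.
have Fhi : \sum_(i | P i) clip (hi - p i) (q i) = \sum_(i | P i) q i.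
  apply: eq_bigr => i _; have := ler_norm (p i); rewrite /clip.
  by have := pq_le i; have := q_ge0 i; case_minmax; lra.
have lo_hi : lo <= hi.
  by rewrite (@le_trans _ _ 0) ?oppr_le0 ?sumr_ge0 // => i _; rewrite addr_ge0.
have [||L _ FL] := @IVT R (fun L => \sum_(i | P i) clip (L - p i) (q i)) _ _ t lo_hi.
- by apply: continuous_subspaceT; exact: continuous_sum_clip.
- by rewrite Flo Fhi (min_l (le_trans t0 tS)) (max_r (le_trans t0 tS)) t0 tS.
by exists L.
Qed.

Definition water_level (t : R) : R :=
  xget 0 [set L | \sum_(i | P i) clip (L - p i) (q i) = t].

Lemma sum_clip_water_level t : 0 <= t <= \sum_(i | P i) q i ->
  \sum_(i | P i) clip (water_level t - p i) (q i) = t.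
Proof. by move=> ht; have := xgetPex 0 (exists_water_level ht). Qed.

Lemma clip_eq_cap L : \sum_(i | P i) clip (L - p i) (q i) = \sum_(i | P i) q i ->
  forall i, P i -> clip (L - p i) (q i) = q i.
Proof.
move=> hs i Pi.
have gap0 : \sum_(j | P j) (q j - clip (L - p j) (q j)) = 0 by rewrite sumrB hs subrr.
have gap_ge0 j : P j -> 0 <= q j - clip (L - p j) (q j) by rewrite subr_ge0 clip_le.
by have := psumr_eq0P gap_ge0 gap0 Pi; lra.
Qed.

End Level.

Lemma addr_room (l c : R) : l + Num.max (c - l) 0 = Num.max l c.
Proof. by case_minmax; lra. Qed.

Lemma addr_clip_room (l L c : R) :
  l + clip (L - l) (Num.max (c - l) 0) = Num.max l (Num.min L c).
Proof. by rewrite /clip; case_minmax; lra. Qed.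

Lemma clip_room_gt0 (l L c : R) : 0 < clip (L - l) (Num.max (c - l) 0) ->
  Num.max l (Num.min L c) = Num.min L c.
Proof. by rewrite /clip; case_minmax; lra. Qed.

End WaterFilling.

Section Step.
Variables (R : realType) (g : R).
Hypothesis g01 : 0 <= g <= 1.

Definition low_room (x : R) := Num.max (g - x) 0.
Definition high_room (x : R) := 1 - Num.max x g.

Lemma low_room_ge0 x : 0 <= low_room x.
Proof. by rewrite /low_room le_max lexx orbT. Qed.

Lemma high_room_ge0 x : x <= 1 -> 0 <= high_room x.
Proof. by case/andP: g01 => ? ? ?; rewrite /high_room; case_minmax; lra. Qed.

(* Phase 1 raises the neighbours [S] of the item towards [g]: the item is split
   among the classes by water-filling on the class totals, and inside a class by
   water-filling on the agents' levels.  Only if phase 1 cannot absorb the whole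
   item does phase 2 water-fill the rest between [g] and [1]. *)
Variables (n k : nat) (cls : 'I_n -> 'I_k) (l : 'I_n -> R) (S : {set 'I_n}).

Definition class_room (i : 'I_k) := \sum_(a | (a \in S) && (cls a == i)) low_room (l a).
Definition total_room := \sum_i class_room i.
Definition saturated := 1 <= total_room.

Definition class_share i :=
  if saturated then clip (water_level xpredT (fun=> 0) class_room 1 - 0) (class_room i)
  else class_room i.
Definition class_level i :=
  water_level (fun a => (a \in S) && (cls a == i)) l (fun a => low_room (l a)) (class_share i).
Definition low_fill a :=
  if a \in S then clip (class_level (cls a) - l a) (low_room (l a)) else 0.

Definition high_total :=
  if saturated then 0 else Num.min (1 - total_room) (\sum_(a in S) high_room (l a)).
Definition high_level :=
  water_level (mem S) (fun a => Num.max (l a) g) (fun a => high_room (l a)) high_total.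
Definition high_fill a :=
  if a \in S then clip (high_level - Num.max (l a) g) (high_room (l a)) else 0.

Definition step a := low_fill a + high_fill a.

Lemma class_room_ge0 i : 0 <= class_room i.
Proof. by apply: sumr_ge0 => a _; exact: low_room_ge0. Qed.

Lemma class_share_bounds i : 0 <= class_share i <= class_room i.
Proof.
rewrite /class_share; case: ifP => _; last by rewrite class_room_ge0 lexx.
by rewrite clip_ge0 ?clip_le ?class_room_ge0.
Qed.

Lemma sum_class_share_saturated : saturated -> \sum_i class_share i = 1.
Proof.
move=> sat; rewrite /class_share sat.
by apply: sum_clip_water_level; [exact: class_room_ge0 | rewrite ler01].
Qed.

Lemma sum_class_share_unsaturated : ~~ saturated -> \sum_i class_share i = total_room.
Proof. by move=> /negbTE unsat; rewrite /class_share unsat. Qed.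

Lemma sum_clip_class_level i :
  \sum_(a | (a \in S) && (cls a == i)) clip (class_level i - l a) (low_room (l a)) =
  class_share i.
Proof.
exact: (@sum_clip_water_level _ _ (fun a => (a \in S) && (cls a == i)) l _
  (fun a => low_room_ge0 (l a)) _ (class_share_bounds i)).
Qed.

Lemma sum_low_fill_class i : \sum_(a | cls a == i) low_fill a = class_share i.
Proof.
rewrite -sum_clip_class_level big_mkcond [RHS]big_mkcond; apply: eq_bigr => a _ /=.
rewrite /low_fill; case: (a \in S) => /=; last by case: ifP.
by case: eqP => // ->.
Qed.

Lemma sum_low_fill : \sum_a low_fill a = \sum_i class_share i.
Proof.
rewrite (partition_big cls xpredT) //=; apply: eq_bigr => i _.
exact: sum_low_fill_class.
Qed.

Lemma low_fill_ge0 a : 0 <= low_fill a.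
Proof. by rewrite /low_fill; case: ifP => // _; rewrite clip_ge0 // low_room_ge0. Qed.

Lemma low_fill_le a : low_fill a <= low_room (l a).
Proof. by rewrite /low_fill; case: ifP => _; rewrite ?clip_le ?low_room_ge0. Qed.

Lemma low_fill_full_class a : a \in S ->
  class_share (cls a) = class_room (cls a) -> low_fill a = low_room (l a).
Proof.
move=> aS full; rewrite /low_fill aS.
apply: (@clip_eq_cap _ _ (fun b => (b \in S) && (cls b == cls a)) l _
  (fun b => low_room_ge0 (l b))); last by rewrite aS eqxx.
by rewrite sum_clip_class_level full.
Qed.

Lemma low_fill_full a : ~~ saturated -> a \in S -> low_fill a = low_room (l a).
Proof. by move=> /negbTE unsat aS; apply: low_fill_full_class; rewrite /class_share ?unsat. Qed.

Hypothesis l01 : forall a, 0 <= l a <= 1.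

Lemma high_room_l_ge0 a : 0 <= high_room (l a).
Proof. by apply: high_room_ge0; case/andP: (l01 a). Qed.

Lemma high_total_bounds : 0 <= high_total <= \sum_(a in S) high_room (l a).
Proof.
have room_ge0 : 0 <= \sum_(a in S) high_room (l a).
  by apply: sumr_ge0 => a _; exact: high_room_l_ge0.
rewrite /high_total; case: ifP => [_|/negbT]; first by rewrite lexx room_ge0.
by rewrite /saturated -ltNge; case_minmax; lra.
Qed.

Lemma sum_clip_high_level :
  \sum_(a in S) clip (high_level - Num.max (l a) g) (high_room (l a)) = high_total.
Proof.
exact: (@sum_clip_water_level _ _ (mem S) (fun a => Num.max (l a) g) _
  high_room_l_ge0 _ high_total_bounds).
Qed.

Lemma sum_high_fill : \sum_a high_fill a = high_total.
Proof. by rewrite -sum_clip_high_level [RHS]big_mkcond. Qed.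

Lemma high_fill_ge0 a : 0 <= high_fill a.
Proof. by rewrite /high_fill; case: ifP => // _; rewrite clip_ge0 // high_room_l_ge0. Qed.

Lemma high_fill_le a : high_fill a <= high_room (l a).
Proof. by rewrite /high_fill; case: ifP => _; rewrite ?clip_le ?high_room_l_ge0. Qed.

Lemma high_fill_saturated a : saturated -> high_fill a = 0.
Proof.
move=> sat; have sum0 : \sum_(b | true) high_fill b = 0 by rewrite sum_high_fill /high_total sat.
exact: (psumr_eq0P (fun b _ => high_fill_ge0 b) sum0).
Qed.

Lemma step_ge0 a : 0 <= step a.
Proof. by rewrite addr_ge0 ?low_fill_ge0 ?high_fill_ge0. Qed.

Lemma step_notin a : a \notin S -> step a = 0.
Proof. by move=> /negbTE aS; rewrite /step /low_fill /high_fill aS addr0. Qed.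

Lemma step_gt0_in a : 0 < step a -> a \in S.
Proof. by apply: contraTT => aS; rewrite step_notin // ltxx. Qed.

Lemma level_step_le1 a : l a + step a <= 1.
Proof.
have := low_fill_le a; have := high_fill_le a; have := l01 a; have := g01.
by rewrite /step /low_room /high_room; case_minmax; lra.
Qed.

Lemma sum_step : \sum_a step a = \sum_i class_share i + high_total.
Proof. by rewrite big_split /= sum_low_fill sum_high_fill. Qed.

Lemma sum_step_le1 : \sum_a step a <= 1.
Proof.
rewrite sum_step; case sat: saturated.
  by rewrite sum_class_share_saturated // /high_total sat addr0.
rewrite sum_class_share_unsaturated ?sat // /high_total sat.
by have := high_total_bounds; rewrite /high_total sat; case_minmax; lra.
Qed.

Lemma sum_class_step_saturated i : saturated ->
  \sum_(a | cls a == i) step a = class_share i.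
Proof.
move=> sat; rewrite -sum_low_fill_class; apply: eq_bigr => a _.
by rewrite /step high_fill_saturated // addr0.
Qed.

Lemma level_step_saturated a : saturated -> a \in S ->
  l a + step a = Num.max (l a) (Num.min (class_level (cls a)) g).
Proof.
by move=> sat aS; rewrite /step high_fill_saturated // addr0 /low_fill aS addr_clip_room.
Qed.

Lemma level_step_unsaturated a : ~~ saturated -> a \in S ->
  l a + step a = Num.max (Num.max (l a) g) (Num.min high_level 1).
Proof.
move=> unsat aS; rewrite /step low_fill_full // /high_fill aS addrA addr_room.
have mx1 : Num.max (l a) g <= 1 by have := l01 a; have := g01; case_minmax; lra.
by rewrite -addr_clip_room /high_room [Num.max (1 - _) _]max_l // subr_ge0.
Qed.

Lemma level_step_full : \sum_a step a < 1 -> forall a, a \in S -> l a + step a = 1.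
Proof.
move=> lt1 a aS.
have unsat : ~~ saturated.
  by apply/negP => sat; move: lt1; rewrite sum_step sum_class_share_saturated // /high_total sat; lra.
have high_full : high_total = \sum_(b in S) high_room (l b).
  by move: lt1; rewrite sum_step sum_class_share_unsaturated // /high_total (negbTE unsat); case_minmax; lra.
have high_fill_full : high_fill a = high_room (l a).
  rewrite /high_fill aS; apply: (@clip_eq_cap _ _ (mem S) (fun b => Num.max (l b) g) _ high_room_l_ge0) => //.
  by rewrite sum_clip_high_level high_full.
have := l01 a; have := g01.
by rewrite /step low_fill_full // high_fill_full /low_room /high_room; case_minmax; lra.
Qed.

Lemma level_step_gt0_saturated a : saturated -> 0 < step a ->
  l a + step a = Num.min (class_level (cls a)) g.
Proof.
move=> sat pos; have aS := step_gt0_in pos.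
rewrite level_step_saturated //; apply: clip_room_gt0.
by move: pos; rewrite /step high_fill_saturated // addr0 /low_fill aS.
Qed.

Lemma level_step_gt0_unsaturated a : ~~ saturated -> 0 < step a ->
  l a + step a = Num.max g (Num.min high_level 1).
Proof.
move=> unsat pos; have aS := step_gt0_in pos.
rewrite level_step_unsaturated //.
move: pos; rewrite /step low_fill_full // /high_fill aS /low_room /high_room.
case: (leP (l a) g) => [_ _ // | gl].
have room : 1 - l a = Num.max (1 - l a) 0 by rewrite max_l // subr_ge0; case/andP: (l01 a).
rewrite max_r ?subr_le0 ?(ltW gl) // add0r {1}room => /clip_room_gt0 lvl.
by rewrite lvl max_r // -lvl le_max (ltW gl).
Qed.

Lemma level_step_le_same_class a b : 0 < step a -> b \in S -> cls a = cls b ->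
  l a + step a <= l b + step b.
Proof.
move=> pos bS eq_cls; case: (boolP saturated) => sat.
  by rewrite level_step_gt0_saturated // level_step_saturated // eq_cls; case_minmax; lra.
by rewrite level_step_gt0_unsaturated // level_step_unsaturated //; case_minmax; lra.
Qed.

Lemma level_step_le_g_or_le a b : 0 < step b -> a \in S ->
  l b + step b <= g \/ l b + step b <= l a + step a.
Proof.
move=> pos aS; case: (boolP saturated) => sat.
  by left; rewrite level_step_gt0_saturated //; case_minmax; lra.
by right; rewrite level_step_gt0_unsaturated // level_step_unsaturated //; case_minmax; lra.
Qed.

(* A neighbour left strictly below [g] means its class did not get its whole
   room, so it got the largest class share (water-filling across classes). *)
Lemma sum_class_step_le_of_below b : b \in S -> l b + step b < g ->
  forall j, \sum_(a | cls a == j) step a <= \sum_(a | cls a == cls b) step a.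
Proof.
move=> bS below j; case: (boolP saturated) => sat; last first.
  by move: below; rewrite level_step_unsaturated //; case_minmax; lra.
rewrite !sum_class_step_saturated //.
have not_full : class_share (cls b) != class_room (cls b).
  apply: contraTneq below => full; rewrite -leNgt.
  rewrite /step low_fill_full_class // high_fill_saturated // addr0 addr_room.
  by rewrite le_max lexx orbT.
have := class_room_ge0 j; move: not_full; rewrite /class_share sat /clip.
by case_minmax; rewrite ?eqxx //; lra.
Qed.

End Step.

Lemma expR_sub_le (R : realType) (a b : R) : a <= b ->
  expR b - expR a <= (b - a) * expR b.
Proof.
move=> ab; have := expR_ge1Dx (a - b); have := expR_gt0 b.
have -> : expR a = expR b * expR (a - b) by rewrite -expRD addrCA subrr addr0.
nra.
Qed.

Section Potentials.
Variables (R : realType) (g : R).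
Hypothesis g01 : 0 <= g <= 1.

(* [usw_potential] has derivative [usw_price]; [low_price] is the constant that
   makes [usw_potential x + 1 - usw_price x >= 1 - low_price] tight both at
   [x = 0] and at [x = 1]. *)
Definition low_price := expR (g - 1) / (g + 1).
Definition usw_potential (x : R) :=
  low_price * Num.min x g + expR (Num.max x g - 1) - expR (g - 1).
Definition usw_price (x : R) := if x <= g then low_price else expR (x - 1).

Definition cef_potential (x : R) := expR (Num.min x g - g) - expR (- g).
Definition cef_price (x : R) := expR (Num.min x g - g).

Lemma low_priceE : low_price * (g + 1) = expR (g - 1).
Proof. by rewrite /low_price divfK //; case/andP: g01 => g0 _; apply/eqP => e; lra. Qed.

Lemma low_price_ge0 : 0 <= low_price.
Proof. by rewrite /low_price divr_ge0 ?expR_ge0 //; case/andP: g01 => g0 _; lra. Qed.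

Lemma low_price_le : low_price <= expR (g - 1).
Proof. by have := low_priceE; have := low_price_ge0; case/andP: g01 => g0 _; nra. Qed.

Lemma usw_potential0 : usw_potential 0 = 0.
Proof. by case/andP: g01 => g0 _; rewrite /usw_potential (min_l g0) (max_r g0); lra. Qed.

Lemma usw_potential1 : usw_potential 1 = 1 - low_price.
Proof.
case/andP: g01 => g0 g1; rewrite /usw_potential (min_r g1) (max_l g1) subrr expR0.
by have := low_priceE; lra.
Qed.

Lemma usw_potential_le x y : x <= y -> usw_potential x <= usw_potential y.
Proof.
move=> xy; rewrite /usw_potential.
have min_le : Num.min x g <= Num.min y g by case_minmax; lra.
have : Num.max x g - 1 <= Num.max y g - 1 by case_minmax; lra.
by rewrite -ler_expR; have := low_price_ge0; nra.
Qed.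

Lemma usw_potential_ge0 x : 0 <= x -> 0 <= usw_potential x.
Proof. by move=> x0; rewrite -usw_potential0; apply: usw_potential_le. Qed.

Lemma low_price_le_usw_price x : low_price <= usw_price x.
Proof.
rewrite /usw_price; case: ifP => [//|/negbT]; rewrite -ltNge => gx.
by apply: le_trans low_price_le _; rewrite ler_expR; lra.
Qed.

Lemma usw_price_below x : x <= g -> usw_price x = low_price.
Proof. by rewrite /usw_price => ->. Qed.

Lemma usw_price_le x y : x <= y -> usw_price x <= usw_price y.
Proof.
move=> xy; case: (leP x g) => [xg | gx]; first by rewrite usw_price_below ?low_price_le_usw_price.
have [nx ny] : (x <= g) = false /\ (y <= g) = false.
  by rewrite !leNgt gx (lt_le_trans gx xy).
by rewrite /usw_price nx ny ler_expR; lra.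
Qed.

Lemma usw_price_le1 x : x <= 1 -> usw_price x <= 1.
Proof.
move=> x1; rewrite /usw_price -[X in _ <= X]expR0; case: ifP => _.
  by apply: le_trans low_price_le _; rewrite ler_expR; case/andP: g01; lra.
by rewrite ler_expR; lra.
Qed.

Lemma usw_potential_sub_le x y : 0 <= x -> x <= y ->
  usw_potential y - usw_potential x <= (y - x) * usw_price y.
Proof.
move=> x0 xy; rewrite /usw_potential /usw_price.
case: (leP y g) => gy; first by rewrite (min_l (le_trans xy gy)) (max_r (le_trans xy gy)); lra.
have le_exp : low_price <= expR (y - 1) by apply: le_trans low_price_le _; rewrite ler_expR; lra.
have := expR_gt0 (y - 1).
case: (leP x g) => gx.
  by have := @expR_sub_le R (g - 1) (y - 1) ltac:(lra); nra.
by have := @expR_sub_le R (x - 1) (y - 1) ltac:(lra); nra.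
Qed.

Lemma usw_ratio_le x : 0 <= x <= 1 -> 1 - low_price <= usw_potential x + 1 - usw_price x.
Proof.
case/andP=> x0 x1; rewrite /usw_potential /usw_price.
have := low_priceE; have := low_price_ge0; case/andP: g01 => g0 g1.
by case: (leP x g) => gx; nra.
Qed.

Lemma cef_potential0 : cef_potential 0 = 0.
Proof. by case/andP: g01 => g0 _; rewrite /cef_potential (min_l g0) sub0r subrr. Qed.

Lemma cef_price_le x y : x <= y -> cef_price x <= cef_price y.
Proof. by move=> xy; rewrite /cef_price ler_expR; case_minmax; lra. Qed.

Lemma cef_potential_le x y : x <= y -> cef_potential x <= cef_potential y.
Proof. by move=> xy; rewrite /cef_potential lerD2r; exact: cef_price_le. Qed.

Lemma cef_potential_ge0 x : 0 <= x -> 0 <= cef_potential x.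
Proof. by move=> x0; rewrite -cef_potential0; apply: cef_potential_le. Qed.

Lemma cef_price_le1 x : cef_price x <= 1.
Proof. by rewrite /cef_price -[X in _ <= X]expR0 ler_expR; case_minmax; lra. Qed.

Lemma cef_price_lt1 x : cef_price x < 1 -> x < g.
Proof. by rewrite /cef_price -[X in _ < X]expR0 ltr_expR; case_minmax; lra. Qed.

Lemma cef_ratioE x : cef_potential x + 1 - cef_price x = 1 - expR (- g).
Proof. by rewrite /cef_potential /cef_price; lra. Qed.

Lemma cef_potential_sub_le x y : x <= y ->
  cef_potential y - cef_potential x <= (y - x) * cef_price y.
Proof.
move=> xy; rewrite /cef_potential /cef_price.
have min_le : Num.min x g - g <= Num.min y g - g by case_minmax; lra.
have : Num.min y g - g - (Num.min x g - g) <= y - x by case_minmax; lra.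
by have := expR_sub_le min_le; have := expR_gt0 (Num.min y g - g); nra.
Qed.

End Potentials.

Section WeakDuality.
Variables (R : realType) (n m : nat) (P : pred 'I_n).
Variables (z : 'I_m -> 'I_n -> R) (cap : 'I_m -> R).
Variables (pot : 'I_n -> R) (dual : 'I_m -> R) (c : R).
Hypotheses (z_ge0 : forall o a, 0 <= z o a) (z_agent : forall a, \sum_o z o a <= 1).
Hypothesis z_item : forall o, \sum_(a | P a) z o a <= cap o.
Hypotheses (pot_ge0 : forall a, 0 <= pot a) (dual_ge0 : forall o, 0 <= dual o).
Hypothesis dual_cover : forall o a, P a -> 0 < z o a -> c <= pot a + dual o.

Lemma weak_duality :
  c * \sum_o \sum_(a | P a) z o a <= \sum_(a | P a) pot a + \sum_o cap o * dual o.
Proof.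
have covered o a : P a -> c * z o a <= pot a * z o a + dual o * z o a.
  move=> Pa; have [->|nz] := eqVneq (z o a) 0; first by rewrite !mulr0 addr0.
  have z_gt0 : 0 < z o a by rewrite lt_neqAle eq_sym nz z_ge0.
  by rewrite -mulrDl ler_wpM2r // dual_cover.
rewrite mulr_sumr; under eq_bigr do rewrite mulr_sumr.
apply: (@le_trans _ _ (\sum_o \sum_(a | P a) (pot a * z o a + dual o * z o a))).
  by apply: ler_sum => o _; apply: ler_sum => a; exact: covered.
rewrite (eq_bigr (fun o => \sum_(a | P a) pot a * z o a + dual o * \sum_(a | P a) z o a)).
  rewrite big_split /= exchange_big /=; apply: lerD.
    by apply: ler_sum => a _; rewrite -mulr_sumr ler_piMr ?pot_ge0 ?z_agent.
  by apply: ler_sum => o _; rewrite mulrC ler_wpM2r ?dual_ge0 ?z_item.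
by move=> o _; rewrite big_split /= mulr_sumr.
Qed.

End WeakDuality.

Section Algorithm.
Variables (R : realType) (g : R).

Definition fill_levels n k (cls : 'I_n -> 'I_k) (h : seq {set 'I_n}) : 'I_n -> R :=
  foldl (fun l S a => l a + step g cls l S a) (fun=> 0) h.

(* The items seen so far determine the current levels, so the last item is
   distributed by [step] from the levels reached after the earlier ones. *)
Definition water_filling : online_alg R := fun n k cls h a =>
  if h is S0 :: t then step g cls (fill_levels cls (belast S0 t)) (last S0 t) a else 0.

Lemma water_filling_rcons n k (cls : 'I_n -> 'I_k) h S a :
  water_filling cls (rcons h S) a = step g cls (fill_levels cls h) S a.
Proof. by case: h => [|S0 h] //=; rewrite belast_rcons last_rcons. Qed.

Lemma fill_levels_rcons n k (cls : 'I_n -> 'I_k) h S a :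
  fill_levels cls (rcons h S) a = fill_levels cls h a + step g cls (fill_levels cls h) S a.
Proof. by rewrite /fill_levels foldl_rcons. Qed.

Hypothesis g01 : 0 <= g <= 1.

Lemma fill_levels_bounds n k (cls : 'I_n -> 'I_k) h a : 0 <= fill_levels cls h a <= 1.
Proof.
elim/last_ind: h a => [|h S IH] a; first by rewrite /fill_levels /= lexx ler01.
rewrite fill_levels_rcons level_step_le1 // andbT.
by rewrite addr_ge0 ?step_ge0 //; case/andP: (IH a).
Qed.

Variables (n k : nat) (cls : 'I_n -> 'I_k) (m : nat) (E : 'I_m -> {set 'I_n}).

Definition level (o : nat) := fill_levels cls [seq E j | j <- take o (enum 'I_m)].
Definition X := run water_filling cls E.

Lemma level_bounds o a : 0 <= level o a <= 1.
Proof. exact: fill_levels_bounds. Qed.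

Lemma level0 a : level 0 a = 0.
Proof. by rewrite /level take0. Qed.

Lemma take_enum_succ (o : 'I_m) :
  [seq E j | j <- take o.+1 (enum 'I_m)] = rcons [seq E j | j <- take o (enum 'I_m)] (E o).
Proof. by rewrite (take_nth o) ?size_enum_ord // map_rcons nth_ord_enum. Qed.

Lemma XE (o : 'I_m) a : X o a = step g cls (level o) (E o) a.
Proof. by rewrite /X /run take_enum_succ water_filling_rcons. Qed.

Lemma level_succ (o : 'I_m) a : level o.+1 a = level o a + X o a.
Proof. by rewrite XE /level take_enum_succ fill_levels_rcons. Qed.

Lemma X_ge0 o a : 0 <= X o a.
Proof. by rewrite XE step_ge0 // => b; exact: level_bounds. Qed.

Lemma level_le_succ o a : level o a <= level o.+1 a.
Proof.
case: (ltnP o m) => [lt_om | le_mo]; first by rewrite (level_succ (Ordinal lt_om)) lerDl X_ge0.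
by rewrite /level !take_oversize ?size_enum_ord // (leq_trans le_mo).
Qed.

Lemma level_le o o' a : (o <= o')%N -> level o a <= level o' a.
Proof.
move/subnKC => <-; elim: (o' - o)%N => [|d IH]; first by rewrite addn0.
by apply: le_trans IH _; rewrite addnS; exact: level_le_succ.
Qed.

Lemma sum_sub_level (F : R -> R) a :
  \sum_(o < m) (F (level o.+1 a) - F (level o a)) = F (level m a) - F 0.
Proof.
by rewrite -(big_mkord xpredT (fun o => F (level o.+1 a) - F (level o a))) telescope_sumr // level0.
Qed.

Lemma agent_val_X a : agent_val X a = level m a.
Proof.
rewrite -[RHS]subr0 -(sum_sub_level id a) /agent_val.
by apply: eq_bigr => o _; rewrite level_succ addrC addKr.
Qed.

Lemma frac_matching_X : frac_matching E X.
Proof.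
split => [o a | o a | o | a].
- exact: X_ge0.
- by rewrite XE; exact: step_notin.
- by under eq_bigr do rewrite XE; apply: sum_step_le1 => // b; exact: level_bounds.
- by rewrite -/(agent_val X a) agent_val_X; case/andP: (level_bounds m a).
Qed.


Definition usw_dual (o : 'I_m) :=
  \sum_a (X o a - (usw_potential g (level o.+1 a) - usw_potential g (level o a))).

Lemma usw_dual_ge_price (o : 'I_m) :
  \sum_a X o a * (1 - usw_price g (level o.+1 a)) <= usw_dual o.
Proof.
apply: ler_sum => a _.
have := usw_potential_sub_le g01 (proj1 (andP (level_bounds o a))) (level_le_succ o a).
have -> : level o.+1 a - level o a = X o a by rewrite level_succ addrC addKr.
lra.
Qed.

Lemma usw_dual_ge0 (o : 'I_m) : 0 <= usw_dual o.
Proof.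
apply: le_trans (usw_dual_ge_price o); apply: sumr_ge0 => a _.
rewrite mulr_ge0 ?X_ge0 // subr_ge0 usw_price_le1 //.
by case/andP: (level_bounds o.+1 a).
Qed.

(* Every buyer of a fully sold item ends below [g] or no higher than [a]. *)
Lemma usw_dual_ge_full (o : 'I_m) a : a \in E o -> \sum_b X o b = 1 ->
  1 - usw_price g (level o.+1 a) <= usw_dual o.
Proof.
move=> aE sold; apply: le_trans (usw_dual_ge_price o).
rewrite -[X in X <= _]mul1r -sold mulr_suml; apply: ler_sum => b _.
have [->|nz] := eqVneq (X o b) 0; first by rewrite !mul0r.
rewrite ler_wpM2l ?X_ge0 // lerD2l lerN2.
have pos : 0 < step g cls (level o) (E o) b by rewrite -XE lt_neqAle eq_sym nz X_ge0.
have l01 c : 0 <= level o c <= 1 by exact: level_bounds.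
case: (level_step_le_g_or_le g01 l01 pos aE); rewrite -!XE -!level_succ => lvl.
  by rewrite usw_price_below ?low_price_le_usw_price.
exact: usw_price_le.
Qed.

Lemma usw_dual_cover (o : 'I_m) a : a \in E o ->
  1 - low_price g <= usw_potential g (level m a) + usw_dual o.
Proof.
move=> aE.
have pot_le : usw_potential g (level o.+1 a) <= usw_potential g (level m a).
  exact/usw_potential_le/level_le.
have := usw_dual_ge0 o; case: (ltP (\sum_b X o b) 1) => [unsold | sold].
  have full : level o.+1 a = 1.
    rewrite level_succ XE; apply: (level_step_full g01) => // [c | ].
      exact: level_bounds.
    by under eq_bigr do rewrite -XE.
  by move: pot_le; rewrite full usw_potential1 //; lra.
have [_ _ item _] := frac_matching_X.
have sold1 : \sum_b X o b = 1 by apply/eqP; rewrite eq_le sold item.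
have := usw_dual_ge_full aE sold1; have := usw_ratio_le g01 (level_bounds o.+1 a).
lra.
Qed.

Lemma usw_X : usw X = \sum_a usw_potential g (level m a) + \sum_o usw_dual o.
Proof.
rewrite /usw_dual exchange_big -big_split /=; apply: eq_bigr => a _.
by rewrite sumrB sum_sub_level usw_potential0 // subr0 -/(agent_val X a) agent_val_X addrC subrK.
Qed.

Lemma usw_X_ge (xs : 'I_m -> 'I_n -> R) : frac_matching E xs ->
  (1 - low_price g) * usw xs <= usw X.
Proof.
case=> xs_ge0 xs_out xs_item xs_agent.
rewrite usw_X /usw /agent_val exchange_big /=.
have := @weak_duality R n m xpredT xs (fun=> 1) (fun a => usw_potential g (level m a))
  usw_dual (1 - low_price g) xs_ge0 xs_agent xs_item.
rewrite (eq_bigr _ (fun o _ => mul1r (usw_dual o))); apply => // [a | o | o a _ pos].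
- by apply: usw_potential_ge0 => //; case/andP: (level_bounds m a).
- exact: usw_dual_ge0.
apply: usw_dual_cover; apply: contraTT pos => aE.
by rewrite xs_out // ltxx.
Qed.

Definition cef_dual (i : 'I_k) (o : 'I_m) :=
  \big[Num.max/0]_(b | (b \in E o) && (cls b == i)) (1 - cef_price g (level o.+1 b)).

Lemma cef_dual_ge0 i o : 0 <= cef_dual i o.
Proof. exact: bigmax_ge_id. Qed.

Lemma cef_dual_cover i (o : 'I_m) a : cls a == i -> a \in E o ->
  1 - expR (- g) <= cef_potential g (level m a) + cef_dual i o.
Proof.
move=> cls_a aE.
have := cef_potential_le g (level_le a (ltn_ord o)).
have : 1 - cef_price g (level o.+1 a) <= cef_dual i o by apply: le_bigmax_cond; rewrite aE.
by have := cef_ratioE g (level o.+1 a); lra.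
Qed.

Lemma cef_dual_le_price i (o : 'I_m) a : cls a == i ->
  X o a * cef_dual i o <= X o a * (1 - cef_price g (level o.+1 a)).
Proof.
move=> /eqP cls_a; have [->|nz] := eqVneq (X o a) 0; first by rewrite !mul0r.
have pos : 0 < step g cls (level o) (E o) a by rewrite -XE lt_neqAle eq_sym nz X_ge0.
rewrite ler_wpM2l ?X_ge0 //; apply: bigmax_le => [|b /andP[bE /eqP cls_b]].
  by rewrite subr_ge0 cef_price_le1.
rewrite lerD2l lerN2; apply: cef_price_le.
have l01 c : 0 <= level o c <= 1 by exact: level_bounds.
have := level_step_le_same_class g01 l01 pos bE; rewrite -!XE -!level_succ.
by apply; rewrite cls_a cls_b.
Qed.

(* A positive [cef_dual i o] is attained at a neighbour of class [i] left below
   [g], so class [i] got the largest share of item [o]. *)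
Lemma class_alloc_mul_cef_dual_le i j (o : 'I_m) :
  class_alloc cls X j o * cef_dual i o <= class_alloc cls X i o * cef_dual i o.
Proof.
have price_ge0 b : 0 <= 1 - cef_price g (level o.+1 b) by rewrite subr_ge0 cef_price_le1.
pose P b := (b \in E o) && (cls b == i).
rewrite /cef_dual; case: (pickP P) => [b0 Pb0 | none]; last by rewrite big_pred0 // !mulr0.
have [b] := eq_bigmax b0 P _ Pb0 (fun b _ => price_ge0 b).
rewrite unfold_in => /andP[bE /eqP cls_b] ->.
case: (ltP (cef_price g (level o.+1 b)) 1) => [below | above]; last first.
  have -> : 1 - cef_price g (level o.+1 b) = 0 by have := cef_price_le1 g (level o.+1 b); lra.
  by rewrite !mulr0.
rewrite ler_wpM2r ?subr_ge0 ?(ltW below) // /class_alloc.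
have := cef_price_lt1 below; rewrite level_succ XE => lvl.
have l01 c : 0 <= level o c <= 1 by exact: level_bounds.
under eq_bigr do rewrite XE; under [X in _ <= X]eq_bigr do rewrite XE.
by rewrite -cls_b; exact: sum_class_step_le_of_below.
Qed.

Lemma class_val_X_ge i j :
  \sum_(a | cls a == i) cef_potential g (level m a) +
  \sum_o class_alloc cls X j o * cef_dual i o <= class_val cls X i.
Proof.
have item_le o : class_alloc cls X j o * cef_dual i o <=
    \sum_(a | cls a == i) (X o a - (cef_potential g (level o.+1 a) - cef_potential g (level o a))).
  apply: le_trans (class_alloc_mul_cef_dual_le i j o) _.
  rewrite /class_alloc mulr_suml; apply: ler_sum => a cls_a.
  apply: le_trans (cef_dual_le_price o cls_a) _.
  have := cef_potential_sub_le g (level_le_succ o a).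
  have -> : level o.+1 a - level o a = X o a by rewrite level_succ addrC addKr.
  lra.
have telescope a : \sum_o (X o a - (cef_potential g (level o.+1 a) - cef_potential g (level o a)))
    = agent_val X a - cef_potential g (level m a).
  by rewrite sumrB sum_sub_level cef_potential0 // subr0.
have := ler_sum (index_enum _) (fun o (_ : true) => item_le o).
rewrite exchange_big /= (eq_bigr _ (fun a _ => telescope a)) sumrB /class_val.
lra.
Qed.

Lemma class_val_X_ge_opt_val i j :
  (1 - expR (- g)) * opt_val cls E i (class_alloc cls X j) <= class_val cls X i.
Proof.
set c := 1 - expR (- g).
have c_ge0 : 0 <= c by rewrite subr_ge0 -[X in _ <= X]expR0 ler_expR; case/andP: g01; lra.
have [->|c_neq0] := eqVneq c 0.
  by rewrite mul0r; apply: sumr_ge0 => a _; apply: sumr_ge0 => o _; exact: X_ge0.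
have c_gt0 : 0 < c by rewrite lt_neqAle eq_sym c_neq0.
rewrite mulrC -ler_pdivlMr //; apply: ge_sup.
  exists 0, (fun _ _ => 0); split => //.
  - by move=> o; rewrite big1 //; apply: sumr_ge0 => a _; exact: X_ge0.
  - by move=> a; rewrite big1 // ler01.
  - by rewrite big1 // => o _; rewrite big1.
move=> v [z [z_ge0 z_out z_item z_agent ->]].
rewrite ler_pdivlMr // mulrC; apply: le_trans (class_val_X_ge i j).
have z_class o : \sum_(a | cls a == i) z o a <= class_alloc cls X j o.
  by apply: le_trans (z_item o); rewrite [X in _ <= X](bigID (fun a => cls a == i)) lerDl sumr_ge0.
apply: (weak_duality z_ge0 z_agent z_class) => [a | o | o a cls_a pos].
- by apply: cef_potential_ge0; case/andP: (level_bounds m a).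
- exact: cef_dual_ge0.
apply: cef_dual_cover cls_a _; apply: contraTT pos => aE.
by rewrite z_out ?aE // ltxx.
Qed.

End Algorithm.

Theorem theorem4 (R : realType) (gamma : R) :
  0 <= gamma <= 1 ->
  exists (r : nat) (p : 'I_r -> R) (A : 'I_r -> online_alg R),
    [/\ randomized_alg p A,
        is_USW p A (1 - expR (gamma - 1) / (gamma + 1)) &
        is_CEF p A (1 - expR (- gamma))].
Proof.
move=> gamma01; exists 1%N, (fun=> 1), (fun=> water_filling gamma); split.
- split=> [_ | | _ n k cls m E]; first exact: ler01.
    by rewrite big_ord1.
  exact: frac_matching_X.
- move=> n k cls m E xs xs_frac; rewrite /expect big_ord1 mul1r.
  exact: usw_X_ge.
- move=> n k cls m E i j; rewrite /expect !big_ord1 !mul1r.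
  exact: class_val_X_ge_opt_val.
Qed.
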